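(* Let $\mu>0$, let $0<j_1<j_2$ be the two smallest positive zeros of the Bessel function $J_1$, and let $\rho>(j_2/j_1)^2$. Then there exists $\omega$ with $j_1\sqrt{\mu/\rho}<\omega<j_2\sqrt{\mu/\rho}$ (in particular $j_1^2\mu\le\rho\omega^2\le j_2^2\mu$) such that $$\det\begin{pmatrix} J_1\big(\omega\sqrt{1/\mu}\big) & J_1\big(\omega\sqrt{\rho/\mu}\big)\\ \omega\sqrt{1/\mu}\,J_1'\big(\omega\sqrt{1/\mu}\big) & \omega\sqrt{\rho/\mu}\,J_1'\big(\omega\sqrt{\rho/\mu}\big)\end{pmatrix}=0 .$$ Consequently, any family of such roots $\omega=\omega(\rho)$ satisfies $\rho\,\omega(\rho)^4\to0$ as $\rho\to\infty$.
   Context: $J_1$ denotes the Bessel function of the first kind of order one and $J_1'$ its derivative. *)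

From Stdlib Require Import Reals Factorial ClassicalEpsilon.
Open Scope R_scope.

Definition J1_term (x : R) (k : nat) : R :=
  (-1) ^ k / (INR (fact k) * INR (fact (S k))) * (x / 2) ^ (2 * k + 1).

(* J_1(x): the sum of its (everywhere convergent) power series. *)
Definition J1 (x : R) : R :=
  epsilon (inhabits 0) (fun l => infinite_sum (J1_term x) l).

Definition J1' (x : R) : R :=
  epsilon (inhabits 0) (fun l => derivable_pt_lim J1 x l).

Definition bessel_det (mu rho omega : R) : R :=
  let a := omega * sqrt (1 / mu) in
  let b := omega * sqrt (rho / mu) in
  J1 a * (b * J1' b) - J1 b * (a * J1' a).

(* Write s = sqrt rho.  Substituting omega = c * sqrt (mu / rho) turns the
   determinant into c times the Wronskian-type expression
       J1 (c/s) * J1' c - J1 c * (1/s) * J1' (c/s),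
   i.e. the numerator of the derivative of c |-> J1 c / J1 (c/s).  When
   s > j2/j1, the point c/s stays in (0, j1) for c in [j1, j2], so J1 (c/s)
   never vanishes there, and Rolle's theorem applied to the quotient (which
   vanishes at j1 and j2) gives the required zero c in (j1, j2).

   The asymptotic part only uses
   the upper bound omega < j2 sqrt (mu/rho), which gives
   rho * omega^4 < j2^4 mu^2 / rho. *)

From Stdlib Require Import Reals Factorial Lra Lia ClassicalEpsilon.
From Coquelicot Require Import Coquelicot.
Open Scope R_scope.

(* Coefficients of the power series P with J1 x = x/2 * P ((x/2)^2). *)
Definition besselJ1_coef (k : nat) : R :=
  (-1) ^ k / (INR (fact k) * INR (fact (S k))).

Lemma besselJ1_coef_neq0 (k : nat) : besselJ1_coef k <> 0.
Proof.
  unfold besselJ1_coef. apply Rmult_integral_contrapositive_currified.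
  - apply pow_nonzero; lra.
  - apply Rinv_neq_0_compat, Rmult_integral_contrapositive_currified;
      apply INR_fact_neq_0.
Qed.

Lemma besselJ1_coef_ratio (n : nat) :
  Rabs (besselJ1_coef (S n) / besselJ1_coef n) = / (INR (S n) * INR (S (S n))).
Proof.
  unfold besselJ1_coef. rewrite (fact_simpl (S n)), (fact_simpl n), !mult_INR.
  assert (hf := INR_fact_neq_0 n).
  assert (h1 : INR (S n) <> 0) by (apply not_0_INR; lia).
  assert (h2 : INR (S (S n)) <> 0) by (apply not_0_INR; lia).
  assert (hs : (-1) ^ n <> 0) by (apply pow_nonzero; lra).
  replace ((-1) ^ S n / (INR (S n) * INR (fact n) * (INR (S (S n)) * (INR (S n) * INR (fact n)))) /
    ((-1) ^ n / (INR (fact n) * (INR (S n) * INR (fact n)))))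
    with (- / (INR (S n) * INR (S (S n)))) by (simpl; field; repeat split; auto).
  rewrite Rabs_Ropp, Rabs_right; auto.
  apply Rle_ge, Rlt_le, Rinv_0_lt_compat, Rmult_lt_0_compat; apply lt_0_INR; lia.
Qed.

Lemma besselJ1_coef_radius : CV_radius besselJ1_coef = p_infty.
Proof.
  apply CV_radius_infinite_DAlembert; [apply besselJ1_coef_neq0|].
  apply is_lim_seq_le_le with (u := fun _ => 0) (w := fun n => / INR (S n)).
  - intro n. rewrite besselJ1_coef_ratio. split.
    + apply Rlt_le, Rinv_0_lt_compat, Rmult_lt_0_compat; apply lt_0_INR; lia.
    + apply Rinv_le_contravar; [apply lt_0_INR; lia|].
      rewrite !S_INR. assert (0 <= INR n) by apply pos_INR. nra.
  - apply is_lim_seq_const.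
  - apply (is_lim_seq_incr_1 (fun n => / INR n)).
    replace (Finite 0) with (Rbar_inv p_infty) by reflexivity.
    apply is_lim_seq_inv; [apply is_lim_seq_INR | discriminate].
Qed.

Lemma J1_pseries (x : R) : J1 x = x / 2 * PSeries besselJ1_coef ((x / 2) ^ 2).
Proof.
  assert (Hsum : infinite_sum (J1_term x) (x / 2 * PSeries besselJ1_coef ((x / 2) ^ 2))).
  { apply is_series_Reals.
    assert (Hp : is_pseries besselJ1_coef ((x / 2) ^ 2) (PSeries besselJ1_coef ((x / 2) ^ 2))).
    { apply PSeries_correct, CV_radius_inside. rewrite besselJ1_coef_radius. exact I. }
    apply (is_series_scal (x / 2)) in Hp.
    eapply is_series_ext; [|exact Hp].
    intro k. unfold J1_term. replace (2 * k + 1)%nat with (S (2 * k)) by lia.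
    rewrite <- (tech_pow_Rmult _ (2 * k)), pow_mult, pow_n_pow.
    unfold scal, besselJ1_coef; simpl; unfold mult; simpl. ring. }
  unfold J1. apply (uniqueness_sum (J1_term x)); [|exact Hsum].
  apply epsilon_spec. eauto.
Qed.

Lemma J1_derivative (x : R) : derivable_pt_lim J1 x (J1' x).
Proof.
  unfold J1'. apply epsilon_spec.
  assert (E : ex_derive (fun x => x / 2 * PSeries besselJ1_coef ((x / 2) ^ 2)) x).
  { auto_derive. eexists. apply is_derive_PSeries.
    rewrite besselJ1_coef_radius. exact I. }
  destruct E as [l Hl]. exists l. apply is_derive_Reals.
  eapply is_derive_ext; [|exact Hl]. intro t. symmetry. apply J1_pseries.
Qed.

Lemma J1_scaled_derivative (s x : R) : s <> 0 ->
  derivable_pt_lim (fun t => J1 (t / s)) x (J1' (x / s) * / s).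
Proof.
  intro hs. apply is_derive_Reals.
  replace (J1' (x / s) * / s) with (scal (/ s) (J1' (x / s)))
    by (unfold scal; simpl; unfold mult; simpl; ring).
  apply (is_derive_comp J1 (fun t => t / s)).
  - apply is_derive_Reals, J1_derivative.
  - auto_derive; [exact I | field; exact hs].
Qed.

Lemma quotient_rolle (f g f' g' : R -> R) (a b : R) :
  a < b ->
  (forall x, a <= x <= b -> derivable_pt_lim f x (f' x)) ->
  (forall x, a <= x <= b -> derivable_pt_lim g x (g' x)) ->
  (forall x, a <= x <= b -> g x <> 0) ->
  f a = 0 -> f b = 0 ->
  exists c, a < c < b /\ f' c * g c - g' c * f c = 0.
Proof.
  intros hab hf hg hg0 hfa hfb.
  set (quot_deriv := fun x => (f' x * g x - g' x * f x) / (g x)²).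
  assert (Hq : forall x, a <= x <= b -> derivable_pt_lim (f / g)%F x (quot_deriv x)).
  { intros x hx. apply derivable_pt_lim_div; auto. }
  assert (pr : forall x, a < x < b -> derivable_pt (f / g)%F x).
  { intros x hx. exists (quot_deriv x). apply Hq; lra. }
  destruct (Rolle (f / g)%F a b pr) as [c [hc Hc]].
  - intros x hx. apply derivable_continuous_pt. exists (quot_deriv x). apply Hq; auto.
  - exact hab.
  - unfold div_fct. rewrite hfa, hfb. unfold Rdiv. ring.
  - exists c. split; [exact hc|].
    rewrite (derive_pt_eq_0 _ c (quot_deriv c) (pr c hc)) in Hc by (apply Hq; lra).
    assert (hgc : (g c)² <> 0) by (apply Rgt_not_eq, Rlt_0_sqr, hg0; lra).
    unfold quot_deriv in Hc. apply (Rmult_eq_reg_r (/ (g c)²)); [|apply Rinv_neq_0_compat; exact hgc].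
    rewrite Rmult_0_l. exact Hc.
Qed.

Lemma bessel_det_rescaled (mu rho c : R) : 0 < mu -> 0 < rho ->
  bessel_det mu rho (c * sqrt (mu / rho)) =
  c * (J1' c * J1 (c / sqrt rho) - J1' (c / sqrt rho) * / sqrt rho * J1 c).
Proof.
  intros hmu hrho.
  assert (ha : c * sqrt (mu / rho) * sqrt (1 / mu) = c / sqrt rho).
  { rewrite Rmult_assoc, <- sqrt_mult_alt by (apply Rlt_le, Rdiv_lt_0_compat; lra).
    replace (mu / rho * (1 / mu)) with (/ rho) by (field; lra).
    rewrite sqrt_inv. reflexivity. }
  assert (hb : c * sqrt (mu / rho) * sqrt (rho / mu) = c).
  { rewrite Rmult_assoc, <- sqrt_mult_alt by (apply Rlt_le, Rdiv_lt_0_compat; lra).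
    replace (mu / rho * (rho / mu)) with 1 by (field; lra).
    rewrite sqrt_1. ring. }
  unfold bessel_det. rewrite ha, hb. unfold Rdiv. ring.
Qed.

(* If s > j2/j1 then J1 (x/s) has no zero for x in [j1, j2]: x/s lies in
   (0, j1), where J1 has no zero by minimality of j1. *)
Lemma J1_scaled_no_zero (j1 j2 s : R) :
  0 < j1 -> j1 < j2 -> j2 / j1 < s ->
  (forall x, 0 < x -> x < j2 -> J1 x = 0 -> x = j1) ->
  forall x, j1 <= x <= j2 -> J1 (x / s) <> 0.
Proof.
  intros hj1 hj12 hs hsmall x hx Hzero.
  assert (hq : 0 < j2 / j1) by (apply Rdiv_lt_0_compat; lra).
  assert (hlt : x / s < j1).
  { apply (Rmult_lt_reg_r s); [lra|].
    replace (x / s * s) with x by (field; lra).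
    apply Rle_lt_trans with j2; [lra|].
    replace j2 with (j1 * (j2 / j1)) at 1 by (field; lra).
    apply Rmult_lt_compat_l; lra. }
  assert (hpos : 0 < x / s) by (apply Rdiv_lt_0_compat; lra).
  assert (x / s = j1) by (apply hsmall; auto; lra). lra.
Qed.

Lemma bessel_det_root (mu j1 j2 rho : R) :
  0 < mu -> 0 < j1 -> j1 < j2 -> J1 j1 = 0 -> J1 j2 = 0 ->
  (forall x, 0 < x -> x < j2 -> J1 x = 0 -> x = j1) ->
  (j2 / j1) ^ 2 < rho ->
  exists omega,
    j1 * sqrt (mu / rho) < omega /\ omega < j2 * sqrt (mu / rho) /\
    bessel_det mu rho omega = 0.
Proof.
  intros hmu hj1 hj12 hz1 hz2 hsmall hr.
  assert (hq : 0 < j2 / j1) by (apply Rdiv_lt_0_compat; lra).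
  assert (hrho : 0 < rho) by (assert (0 < (j2 / j1) ^ 2) by (apply pow_lt; lra); lra).
  assert (hs : j2 / j1 < sqrt rho).
  { rewrite <- (sqrt_pow2 (j2 / j1)) by lra.
    apply sqrt_lt_1_alt. split; [apply pow_le; lra | exact hr]. }
  destruct (quotient_rolle J1 (fun x => J1 (x / sqrt rho)) J1'
              (fun x => J1' (x / sqrt rho) * / sqrt rho) j1 j2)
    as [c [hc Hc]]; auto.
  - intros x _. apply J1_derivative.
  - intros x _. apply J1_scaled_derivative. lra.
  - exact (J1_scaled_no_zero j1 j2 (sqrt rho) hj1 hj12 hs hsmall).
  - assert (hsq : 0 < sqrt (mu / rho)) by (apply sqrt_lt_R0, Rdiv_lt_0_compat; lra).
    exists (c * sqrt (mu / rho)).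
    split; [apply Rmult_lt_compat_r; lra|].
    split; [apply Rmult_lt_compat_r; lra|].
    rewrite bessel_det_rescaled by assumption. rewrite Hc. ring.
Qed.

Lemma rho_omega4_bound (mu rho K omega : R) :
  0 < mu -> 0 < rho -> 0 < omega -> omega < K * sqrt (mu / rho) ->
  rho * omega ^ 4 < K ^ 4 * mu ^ 2 / rho.
Proof.
  intros hmu hrho hw hK.
  assert (hq2 : sqrt (mu / rho) ^ 2 = mu / rho)
    by (apply pow2_sqrt, Rlt_le, Rdiv_lt_0_compat; lra).
  assert (h4 : omega ^ 4 < (K * sqrt (mu / rho)) ^ 4).
  { set (b := K * sqrt (mu / rho)) in *.
    assert (omega * omega < b * b) by nra.
    replace (omega ^ 4) with ((omega * omega) * (omega * omega)) by ring.
    replace (b ^ 4) with ((b * b) * (b * b)) by ring. nra. }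
  replace (K ^ 4 * mu ^ 2 / rho) with (rho * (K * sqrt (mu / rho)) ^ 4).
  - apply Rmult_lt_compat_l; assumption.
  - replace ((K * sqrt (mu / rho)) ^ 4) with (K ^ 4 * (sqrt (mu / rho) ^ 2) ^ 2) by ring.
    rewrite hq2. field. lra.
Qed.

Lemma bessel_root_decay (mu j1 j2 : R) (omega : R -> R) :
  0 < mu -> 0 < j1 -> j1 < j2 ->
  (forall rho, (j2 / j1) ^ 2 < rho ->
     j1 * sqrt (mu / rho) < omega rho /\ omega rho < j2 * sqrt (mu / rho)) ->
  forall eps, 0 < eps -> exists M, forall rho, M < rho -> (j2 / j1) ^ 2 < rho ->
     Rabs (rho * omega rho ^ 4) < eps.
Proof.
  intros hmu hj1 hj12 Hw eps he.
  exists (j2 ^ 4 * mu ^ 2 / eps). intros rho hM hr.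
  assert (hrho : 0 < rho)
    by (assert (0 < (j2 / j1) ^ 2) by (apply pow_lt, Rdiv_lt_0_compat; lra); lra).
  destruct (Hw rho hr) as [hlow hup].
  assert (hw : 0 < omega rho).
  { apply Rlt_trans with (j1 * sqrt (mu / rho)); [|exact hlow].
    apply Rmult_lt_0_compat; [lra | apply sqrt_lt_R0, Rdiv_lt_0_compat; lra]. }
  rewrite Rabs_right by (apply Rle_ge, Rmult_le_pos; [lra | apply pow_le; lra]).
  apply Rlt_trans with (j2 ^ 4 * mu ^ 2 / rho); [apply rho_omega4_bound; assumption|].
  apply (Rmult_lt_reg_r (rho / eps)); [apply Rdiv_lt_0_compat; lra|].
  replace (j2 ^ 4 * mu ^ 2 / rho * (rho / eps)) with (j2 ^ 4 * mu ^ 2 / eps) by (field; lra).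
  replace (eps * (rho / eps)) with rho by (field; lra). exact hM.
Qed.

Theorem mainTheorem5 (mu j1 j2 : R)
  (hmu : 0 < mu)
  (hj1 : 0 < j1) (hj12 : j1 < j2)
  (hz1 : J1 j1 = 0) (hz2 : J1 j2 = 0)
  (hsmall : forall x, 0 < x -> x < j2 -> J1 x = 0 -> x = j1) :
  (forall rho, (j2 / j1) ^ 2 < rho ->
     exists omega,
       j1 * sqrt (mu / rho) < omega /\ omega < j2 * sqrt (mu / rho) /\
       bessel_det mu rho omega = 0)
  /\
  (forall omega : R -> R,
     (forall rho, (j2 / j1) ^ 2 < rho ->
        j1 * sqrt (mu / rho) < omega rho /\ omega rho < j2 * sqrt (mu / rho) /\
        bessel_det mu rho (omega rho) = 0) ->
     forall eps, 0 < eps -> exists M, forall rho, M < rho -> (j2 / j1) ^ 2 < rho ->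
        Rabs (rho * (omega rho) ^ 4) < eps).
Proof.
  split.
  - intro rho. apply bessel_det_root; assumption.
  - intros omega Hroots. apply (bessel_root_decay mu j1 j2); auto.
    intros rho hr. destruct (Hroots rho hr) as [hlow [hup _]]. split; assumption.
Qed.
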